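(* Let $k\ge1$ and let $S_1,\dots,S_k\in\mathcal{B}_A(\mathcal{H})$. Then for every positive integer $n$, $$\omega_A^{2n}\Big(\sum_{i=1}^kS_i\Big)\le\frac{k^{2n-1}}{2}\Big\|\sum_{i=1}^k\Big(\big(S_i^{\sharp_A}S_i\big)^n+\big(S_iS_i^{\sharp_A}\big)^n\Big)\Big\|_A.$$
   Context: $\mathcal{H}$ is a complex Hilbert space with inner product $\langle\cdot,\cdot\rangle$, and $A$ is a fixed nonzero positive bounded operator on $\mathcal{H}$. Set $\langle x,y\rangle_A=\langle Ax,y\rangle$ and $\|x\|_A=\|A^{1/2}x\|$. $\mathcal{B}_A(\mathcal{H})$ is the set of bounded operators $T$ for which there exists a bounded $S$ with $\langle Tx,y\rangle_A=\langle x,Sy\rangle_A$ for all $x,y$ (equivalently $\mathcal{R}(T^*A)\subseteq\mathcal{R}(A)$). For $T\in\mathcal{B}_A(\mathcal{H})$, $T^{\sharp_A}=A^\dagger T^*A$ ($A^\dagger$ the Moore–Penrose inverse) is the reduced solution of $AX=T^*A$. For an operator $T$ with $\|Tx\|_A\le\lambda\|x\|_A$ for some $\lambda>0$ and all $x$, $\|T\|_A=\sup\{\|Tx\|_A: \|x\|_A=1\}$, and $\omega_A(T)=\sup\{|\langle Tx,x\rangle_A|:\|x\|_A=1\}$. *)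

From HB Require Import structures.
From mathcomp Require Import all_boot all_order all_algebra.
From mathcomp Require Import complex.
From mathcomp Require Import classical_sets reals.
Set Implicit Arguments. Unset Strict Implicit. Unset Printing Implicit Defensive.
Import Order.TTheory GRing.Theory Num.Theory.
Local Open Scope ring_scope.
Local Open Scope complex_scope.

Record HilbertSpace (R : realType) := {
  Hcar :> lmodType R[i];
  inner : Hcar -> Hcar -> R[i];
  inner_linear : forall (a : R[i]) (x y z : Hcar),
      inner (a *: x + y) z = a * inner x z + inner y z;
  inner_conj : forall x y : Hcar, inner y x = (inner x y)^*;
  inner_pos : forall x : Hcar, complex.Im (inner x x) = 0 /\ 0 <= complex.Re (inner x x);
  inner_def : forall x : Hcar, inner x x = 0 -> x = 0;
  inner_complete : forall u : nat -> Hcar,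
      (forall e : R, 0 < e -> exists N : nat, forall m p : nat, (N <= m)%N -> (N <= p)%N ->
          Num.sqrt (complex.Re (inner (u m - u p) (u m - u p))) < e) ->
      exists l : Hcar, forall e : R, 0 < e -> exists N : nat, forall m : nat, (N <= m)%N ->
          Num.sqrt (complex.Re (inner (u m - l) (u m - l))) < e
}.

Section Ops.
Variable R : realType.
Variable H : HilbertSpace R.

Definition hnorm (x : H) : R := Num.sqrt (complex.Re (inner x x)).

Definition is_linear (T : H -> H) :=
  forall (a : R[i]) (x y : H), T (a *: x + y) = a *: T x + T y.

Definition bounded (T : H -> H) :=
  is_linear T /\ exists M : R, forall x, hnorm (T x) <= M * hnorm x.

Definition positive_op (A : H -> H) :=
  bounded A /\ forall x, complex.Im (inner (A x) x) = 0 /\ 0 <= complex.Re (inner (A x) x).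

Definition innerA (A : H -> H) (x y : H) : R[i] := inner (A x) y.

(* ||x||_A = ||A^{1/2} x|| = sqrt <Ax,x> *)
Definition normA (A : H -> H) (x : H) : R := Num.sqrt (complex.Re (inner (A x) x)).

Definition in_BA (A T : H -> H) :=
  bounded T /\ exists S, bounded S /\ forall x y, innerA A (T x) y = innerA A x (S y).

Definition is_adjoint (T Ts : H -> H) := forall x y, inner (T x) y = inner x (Ts y).

Definition in_closure_range (A : H -> H) (v : H) :=
  forall e : R, 0 < e -> exists z, hnorm (v - A z) < e.

(* X = T^{#_A}: the reduced solution of A X = T^* A, i.e. the (unique) bounded
   solution X of A X = T^* A with range contained in the closure of R(A);
   this is A^dagger T^* A (Douglas' theorem). *)
Definition is_sharpA (A T X : H -> H) :=
  bounded X /\ exists Ts, bounded Ts /\ is_adjoint T Ts /\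
    (forall x, A (X x) = Ts (A x)) /\ (forall y, in_closure_range A (X y)).

Definition opnormA (A T : H -> H) : R :=
  sup [set r : R | exists x, normA A x = 1 /\ r = normA A (T x)].

Definition numradA (A T : H -> H) : R :=
  sup [set r : R | exists x, normA A x = 1 /\ r = Normc.normc (innerA A (T x) x)].

End Ops.

(* Fix x with ||x||_A = 1. The triangle inequality and the power-mean inequality give
   |<(sum S_i) x, x>_A|^2n <= k^(2n-1) sum |<S_i x, x>_A|^2n. By Cauchy-Schwarz for the
   semi-inner product <.,.>_A, |<S x, x>_A|^2 is bounded both by <S^# S x, x>_A and by
   <S S^# x, x>_A, and McCarthy's inequality <P x, x>^n <= <P^n x, x> for the A-positive
   operators P = S^# S and S S^# lifts both bounds to the n-th power. Averaging and summing
   bounds the left side by k^(2n-1)/2 <T x, x>_A <= k^(2n-1)/2 ||T x||_A, where T is the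
   operator inside ||.||_A; taking the supremum needs T to be A-bounded, which follows from
   Reid's inequality for the bounded A-selfadjoint operators S^# S and S S^#. *)

From HB Require Import structures.
From mathcomp Require Import all_boot all_order all_algebra.
From mathcomp Require Import complex.
From mathcomp Require Import classical_sets reals.
From mathcomp Require Import boolp ring lra.
Import Order.TTheory GRing.Theory Num.Theory.
Local Open Scope ring_scope.

Section RealFieldInequalities.
Context {R : realFieldType}.
Implicit Types x y e : R.

Lemma subrXX_le n x y : 0 <= y -> y <= x ->
  x ^+ n - y ^+ n <= n%:R * x ^+ n.-1 * (x - y).
Proof.
move=> y0 yx; rewrite subrXX mulrC ler_wpM2r ?subr_ge0 //.
rewrite -[n in n%:R]card_ord mulr_natl -sumr_const; apply: ler_sum => i _.
have i_le : (i <= n.-1)%N by rewrite -ltnS (ltn_predK (ltn_ord i)).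
rewrite -{2}(subnK i_le) exprD ler_wpM2l ?exprn_ge0 ?(le_trans y0) //.
by rewrite lerXn2r ?nnegrE ?(le_trans y0).
Qed.

Lemma bernoulli_le n e : 0 <= e -> 1 + n%:R * e <= (1 + e) ^+ n.
Proof.
move=> e0; elim: n => [|n IH]; first by rewrite mul0r addr0 expr0.
rewrite exprS; apply: le_trans (ler_wpM2l _ IH); last lra.
by have := ler0n R n; rewrite -natr1; nra.
Qed.

Lemma expr2n_le_of_sqr_le (r : nat -> R) : (forall j, 0 <= r j) ->
  (forall j, r j ^+ 2 <= r j.+1) -> forall j, r 0%N ^+ (2 ^ j) <= r j.
Proof.
move=> r0 r_sqr; elim=> [|j IH]; first by rewrite expn0 expr1.
rewrite expnS mulnC exprM; apply: le_trans (r_sqr j) => //.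
by rewrite lerXn2r ?nnegrE ?exprn_ge0.
Qed.

Lemma expr_le_of_log_convex (m : nat -> R) : m 0%N = 1 -> (forall j, 0 <= m j) ->
  (forall j, m j.+1 ^+ 2 <= m j * m j.+2) -> forall n, m 1%N ^+ n <= m n.
Proof.
move=> m0 m_ge0 m_lc.
have m1_ratio j : m 1%N * m j <= m j.+1.
  elim: j => [|j IH]; first by rewrite m0 mulr1.
  have [->|mj1_neq0] := eqVneq (m j.+1) 0; first by rewrite mulr0.
  have mj1_gt0 : 0 < m j.+1 by rewrite lt_def mj1_neq0 m_ge0.
  rewrite -(ler_pM2r mj1_gt0) -mulrA -expr2.
  apply: le_trans (ler_wpM2l (m_ge0 1%N) (m_lc j)) _.
  by rewrite mulrA mulrC ler_wpM2l.
elim=> [|n IH]; first by rewrite expr0 m0.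
by rewrite exprS; apply: le_trans (m1_ratio n); rewrite ler_wpM2l.
Qed.

Lemma chebyshev_sumr_expr {k : nat} (a : 'I_k -> R) p : (forall i, 0 <= a i) ->
  (\sum_i a i) * (\sum_i a i ^+ p) <= k%:R * \sum_i a i ^+ p.+1.
Proof.
move=> a0.
have pair_le i j : a i * a j ^+ p + a j * a i ^+ p <= a i ^+ p.+1 + a j ^+ p.+1.
  have : 0 <= (a i - a j) * (a i ^+ p - a j ^+ p).
    case/orP: (le_total (a i) (a j)) => le_a.
      by apply: mulr_le0; rewrite subr_le0 //; apply: lerXn2r; rewrite ?nnegrE.
    by apply: mulr_ge0; rewrite subr_ge0 //; apply: lerXn2r; rewrite ?nnegrE.
  rewrite !exprS; lra.
have double_le : \sum_(i < k) \sum_(j < k) (a i * a j ^+ p + a j * a i ^+ p) <=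
       \sum_(i < k) \sum_(j < k) (a i ^+ p.+1 + a j ^+ p.+1).
  by apply: ler_sum => i _; apply: ler_sum => j _; exact: pair_le.
move: double_le; under eq_bigr do rewrite big_split /=.
under [X in _ <= X]eq_bigr do rewrite big_split /=.
rewrite !big_split /= [X in _ + X <= _]exchange_big [X in _ <= _ + X]exchange_big /=.
move=> double_le.
rewrite big_distrl /=; under eq_bigr do rewrite big_distrr /=.
have -> : k%:R * \sum_i a i ^+ p.+1 = \sum_(i < k) \sum_(j < k) a i ^+ p.+1.
  by rewrite big_distrr /=; apply: eq_bigr => i _; rewrite sumr_const card_ord mulr_natl.
lra.
Qed.

Lemma expr_sumr_le {k : nat} (a : 'I_k -> R) m : (forall i, 0 <= a i) ->
  (\sum_i a i) ^+ m.+1 <= k%:R ^+ m * \sum_i a i ^+ m.+1.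
Proof.
move=> a0; elim: m => [|m IH].
  by rewrite expr0 mul1r expr1; apply: ler_sum => i _; rewrite expr1.
rewrite exprS; apply: le_trans (ler_wpM2l (sumr_ge0 _ (fun i _ => a0 i)) IH) _.
rewrite mulrCA exprS (mulrC k%:R) -mulrA.
by apply: ler_wpM2l; [exact: exprn_ge0 | exact: chebyshev_sumr_expr].
Qed.

Lemma le_mul_of_quadratic_ge0 (a b s : R) : 0 <= b -> 0 <= s ->
  (forall t, 0 <= a - 2 * t * s + t ^+ 2 * s * b) -> s <= a * b.
Proof.
move=> b_ge0 s_ge0 Q; have [b0|b_neq0] := eqVneq b 0.
  rewrite b0 mulr0; have [s0|s_neq0] := eqVneq s 0; first by rewrite s0.
  have := Q ((a + 1) / (2 * s)); rewrite b0 mulr0 addr0.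
  have -> : 2 * ((a + 1) / (2 * s)) * s = a + 1 by field.
  lra.
have b_gt0 : 0 < b by rewrite lt_def b_neq0.
have := Q b^-1; have -> : a - 2 * b^-1 * s + b^-1 ^+ 2 * s * b = a - s / b by field.
by rewrite subr_ge0 ler_pdivrMr.
Qed.

End RealFieldInequalities.

Lemma le1_of_expr2n_bounded (R : archiRealFieldType) (x B : R) :
  (forall j, x ^+ (2 ^ j) <= B) -> x <= 1.
Proof.
move=> x_le; rewrite leNgt; apply/negP => x_gt1.
have e_gt0 : 0 < x - 1 by rewrite subr_gt0.
have B_gt0 : 0 < B by apply: lt_le_trans (x_le 0%N); rewrite expn0 expr1 (lt_trans ltr01).
set j := Num.bound (B / (x - 1)).
have B_lt : B < j%:R * (x - 1).
  by rewrite -ltr_pdivrMr // archi_boundP // divr_ge0 ?ltW.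
have j_le : (j%:R : R) <= (2 ^ j)%:R by rewrite ler_nat ltnW // ltn_expl.
have := @bernoulli_le _ (2 ^ j) _ (ltW e_gt0); rewrite [1 + (x - 1)]addrC subrK => bern.
have := ler_wpM2r (ltW e_gt0) j_le; have := x_le j; lra.
Qed.

Lemma le_of_sqr_chain (R : archiRealFieldType) (t : nat -> R) (N c B : R) :
  0 <= N -> 0 < c -> (forall j, 0 <= t j) -> (forall j, t j ^+ 2 <= t j.+1 * N) ->
  (forall j, t j <= B * c ^+ (2 ^ j)) -> t 0%N <= c * N.
Proof.
move=> N_ge0 c_gt0 t_ge0 t_sqr t_le; have [N0|N_neq0] := eqVneq N 0.
  by have := t_sqr 0%N; have := t_ge0 0%N; rewrite N0 !mulr0; nra.
have N_gt0 : 0 < N by rewrite lt_def N_neq0.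
pose r j := t j / N.
have r_ge0 j : 0 <= r j by rewrite divr_ge0.
have r_sqr j : r j ^+ 2 <= r j.+1.
  by rewrite /r expr_div_n ler_pdivrMr ?exprn_gt0 // [N ^+ 2]expr2 mulrA divfK ?gt_eqF.
have : r 0%N / c <= 1.
  apply: (@le1_of_expr2n_bounded _ _ (B / N)) => j.
  rewrite expr_div_n ler_pdivrMr ?exprn_gt0 //.
  apply: le_trans (expr2n_le_of_sqr_le _ r_ge0 r_sqr j) _.
  by rewrite /r mulrAC ler_pM2r ?invr_gt0.
by rewrite ler_pdivrMr // mul1r ler_pdivrMr // mulrC.
Qed.

Lemma sup_expr_le (R : realType) (E : set R) (C : R) m : (0 < m)%N -> 0 <= C ->
  (forall r, E r -> 0 <= r /\ r ^+ m <= C) -> sup E ^+ m <= C.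
Proof.
move=> m_gt0 C_ge0 E_le; have [supE|/sup_out ->] := pselect (has_sup E); last first.
  by rewrite expr0n gtn_eqF.
have [[r0 Er0] _] := supE; set s := sup E.
have Es r : E r -> r <= s by exact: sup_upper_bound.
have s_ge0 : 0 <= s by apply: le_trans (Es _ Er0); case: (E_le _ Er0).
rewrite leNgt; apply/negP => C_lt.
have M_gt0 : 0 < m%:R * s ^+ m.-1.
  rewrite mulr_gt0 ?ltr0n // exprn_gt0 // lt_def s_ge0 andbT.
  by apply: contraTneq C_lt => ->; rewrite expr0n gtn_eqF // -leNgt.
set d := (s ^+ m - C) / (m%:R * s ^+ m.-1).
have d_gt0 : 0 < d by rewrite divr_gt0 // subr_gt0.
have sd_lt : s - d < s by rewrite gtrDl oppr_lt0.
have [y Ey y_gt] := sup_gt (ex_intro _ r0 Er0) sd_lt.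
have [y_ge0 yC] := E_le y Ey.
have gap : m%:R * s ^+ m.-1 * (s - y) < s ^+ m - C.
  by rewrite -[s ^+ m - C](divfK (lt0r_neq0 M_gt0)) -/d mulrC ltr_pM2r //; lra.
have := subrXX_le m s y y_ge0 (Es y Ey); lra.
Qed.

Section ComplexNorm.
Local Open Scope complex_scope.
Context {R : rcfType}.

Lemma normc_ge0 (z : R[i]) : 0 <= Normc.normc z.
Proof. by case: z => a b; exact: sqrtr_ge0. Qed.

Lemma Re_le_normc (z : R[i]) : complex.Re z <= Normc.normc z.
Proof.
case: z => a b /=; apply: le_trans (ler_norm a) _; rewrite -sqrtr_sqr.
by rewrite ler_sqrt ?addr_ge0 ?sqr_ge0 // lerDl sqr_ge0.
Qed.

Lemma normc_sumr_le (I : Type) (r : seq I) (F : I -> R[i]) :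
  Normc.normc (\sum_(i <- r) F i) <= \sum_(i <- r) Normc.normc (F i).
Proof.
elim/big_rec2: _ => [|i y1 y2 _ IH]; first by rewrite Normc.normc0.
by apply: le_trans (le_normcD _ _) _; rewrite lerD2l.
Qed.

End ComplexNorm.

Section Polarization.
Local Open Scope complex_scope.
Context {R : rcfType} {V : lmodType R[i]} {F : V -> V -> R[i]}.
Hypothesis F_linear : forall (a : R[i]) x y z, F (a *: x + y) z = a * F x z + F y z.
Hypothesis F_semilinear : forall (a : R[i]) x y z, F z (a *: x + y) = a^* * F z x + F z y.

(* Expanding F (a y + x) (a y + x) at a = 1 and a = 'i identifies the
   real and imaginary parts of F y x and (F x y)^*. *)
Lemma sesq_herm_of_real_diag :
  (forall x, complex.Im (F x x) = 0) -> forall x y, F y x = (F x y)^*.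
Proof.
move=> F_real x y.
have E (a : R[i]) : F (a *: y + x) (a *: y + x) =
    a * (a^* * F y y + F y x) + (a^* * F x y + F x x).
  by rewrite F_linear !F_semilinear.
have := F_real (1 *: y + x); have := F_real ('i *: y + x); rewrite !E.
have := F_real x; have := F_real y.
case: (F x x) => a1 a2; case: (F y y) => b1 b2.
case: (F y x) => c1 c2; case: (F x y) => d1 d2 /= -> -> h1 h2.
congr (_ +i* _); lra.
Qed.

End Polarization.

Section SemiInnerProduct.
Local Open Scope complex_scope.
Context {R : rcfType} {V : lmodType R[i]} {F : V -> V -> R[i]}.
Hypothesis F_linear : forall (a : R[i]) x y z, F (a *: x + y) z = a * F x z + F y z.
Hypothesis F_herm : forall x y, F y x = (F x y)^*.
Hypothesis F_ge0 : forall x, 0 <= complex.Re (F x x).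

Lemma sesq0l z : F 0 z = 0.
Proof.
have := F_linear 1 0 0 z; rewrite scaler0 addr0 mul1r => F0.
by apply: (@addrI _ (F 0 z)); rewrite addr0 -F0.
Qed.

Lemma sesqDl x y z : F (x + y) z = F x z + F y z.
Proof. by rewrite -[x]scale1r F_linear mul1r scale1r. Qed.

Lemma sesqZDr a x y z : F z (a *: x + y) = a^* * F z x + F z y.
Proof.
rewrite F_herm F_linear (F_herm z x) (F_herm z y).
by rewrite rmorphD rmorphM /= !conjcK.
Qed.

Lemma sesqDr x y z : F z (x + y) = F z x + F z y.
Proof. by rewrite -[x]scale1r sesqZDr rmorph1 mul1r scale1r. Qed.

Lemma sesq_diag_real x : complex.Im (F x x) = 0.
Proof. by have := F_herm x x; case: (F x x) => a b [] /=; lra. Qed.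

Lemma normc_sesq_sqr_le x y :
  Normc.normc (F x y) ^+ 2 <= complex.Re (F x x) * complex.Re (F y y).
Proof.
have E (c : R[i]) : F (c *: y + x) (c *: y + x) =
    c * (c^* * F y y + (F x y)^*) + (c^* * F x y + F x x).
  by rewrite F_linear !sesqZDr (F_herm x y).
have := F_ge0 y; have := F_ge0 x; have := sesq_diag_real x; have := sesq_diag_real y.
have F_ge0' c := F_ge0 (c *: y + x).
move: F_ge0' E; case: (F x x) => a a'; case: (F y y) => b b'.
case: (F x y) => p r /= F_ge0' E b'0 a'0 a_ge0 b_ge0; subst a' b'.
rewrite sqr_sqrtr ?addr_ge0 ?sqr_ge0 //.
apply: le_mul_of_quadratic_ge0; [done | by rewrite addr_ge0 ?sqr_ge0 | move=> t].
(* the positivity of F (c y + x) (c y + x) at c = - t F(x, y) *)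
by have := F_ge0' ((- t * p) +i* (- t * r)); rewrite E /=; nra.
Qed.

Lemma normc_sesq_le x y :
  Normc.normc (F x y) <= Num.sqrt (complex.Re (F x x)) * Num.sqrt (complex.Re (F y y)).
Proof.
rewrite -ler_sqr ?nnegrE ?normc_ge0 ?mulr_ge0 ?sqrtr_ge0 //.
by rewrite exprMn !sqr_sqrtr // normc_sesq_sqr_le.
Qed.

Lemma Re_sesq_le x y :
  complex.Re (F x y) <= Num.sqrt (complex.Re (F x x)) * Num.sqrt (complex.Re (F y y)).
Proof. exact: le_trans (Re_le_normc _) (normc_sesq_le x y). Qed.

Lemma sesq_seminormD x y :
  Num.sqrt (complex.Re (F (x + y) (x + y))) <=
  Num.sqrt (complex.Re (F x x)) + Num.sqrt (complex.Re (F y y)).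
Proof.
have E : complex.Re (F (x + y) (x + y)) =
    complex.Re (F x x) + complex.Re (F y y) + 2 * complex.Re (F x y).
  rewrite sesqDl !sesqDr (F_herm x y) !raddfD /=.
  by case: (F x y) => ? ? /=; ring.
have := Re_sesq_le x y; have := sqr_sqrtr (F_ge0 x); have := sqr_sqrtr (F_ge0 y).
have := sqrtr_ge0 (complex.Re (F x x)); have := sqrtr_ge0 (complex.Re (F y y)).
set u := Num.sqrt (complex.Re (F x x)); set v := Num.sqrt (complex.Re (F y y)).
move=> v_ge0 u_ge0 v_sqr u_sqr CS.
rewrite -[u + v]ger0_norm ?addr_ge0 // -sqrtr_sqr ler_sqrt ?sqr_ge0 // E.
nra.
Qed.

Lemma sqr_Re_sesq_le x y :
  complex.Re (F x y) ^+ 2 <= complex.Re (F x x) * complex.Re (F y y).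
Proof.
apply: le_trans (normc_sesq_sqr_le x y); case: (F x y) => a b /=.
by rewrite sqr_sqrtr ?addr_ge0 ?sqr_ge0 // lerDl sqr_ge0.
Qed.

End SemiInnerProduct.

Lemma iter_le_expr (T : Type) (R : numDomainType) (nrm : T -> R) (Q : T -> T) (c : R) :
  0 <= c -> (forall x, nrm (Q x) <= c * nrm x) ->
  forall m x, nrm (iter m Q x) <= c ^+ m * nrm x.
Proof.
move=> c_ge0 Q_le; elim=> [|m IH] x /=; first by rewrite expr0 mul1r.
by apply: le_trans (Q_le _) _; rewrite exprS -mulrA ler_wpM2l.
Qed.

Lemma iter_linear (R : realType) (H : HilbertSpace R) (T : H -> H) n :
  is_linear T -> is_linear (iter n T).
Proof. by move=> T_lin; elim: n => [|n IH] a x y //=; rewrite IH T_lin. Qed.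

Lemma bounded_comp (R : realType) (H : HilbertSpace R) {X Y : H -> H} :
  bounded X -> bounded Y -> bounded (X \o Y).
Proof.
move=> [X_lin [MX X_le]] [Y_lin [MY Y_le]]; split=> [a x y /=|].
  by rewrite Y_lin X_lin.
exists (`|MX| * MY) => x /=; apply: le_trans (X_le _) _.
apply: le_trans (_ : _ <= `|MX| * hnorm (Y x)) _.
  by apply: ler_wpM2r; [exact: sqrtr_ge0 | exact: ler_norm].
by rewrite -mulrA ler_wpM2l.
Qed.

Definition A_bounded {R : realType} {H : HilbertSpace R} (A T : H -> H) :=
  exists c, forall x, normA A (T x) <= c * normA A x.

Definition A_adjoint {R : realType} {H : HilbertSpace R} (A X Y : H -> H) :=
  forall u v, innerA A (X u) v = innerA A u (Y v).

Section ASemiInnerProduct.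
Local Open Scope complex_scope.
Context {R : realType} {H : HilbertSpace R} {A : H -> H}.
Hypothesis A_pos : positive_op A.

Lemma innerA_linear a x y z :
  innerA A (a *: x + y) z = a * innerA A x z + innerA A y z.
Proof. by case: A_pos => [[A_lin _] _]; rewrite /innerA A_lin inner_linear. Qed.

Lemma innerA_semilinear a x y z :
  innerA A z (a *: x + y) = a^* * innerA A z x + innerA A z y.
Proof. exact: (sesqZDr (@inner_linear _ H) (@inner_conj _ H)). Qed.

Lemma Re_innerA_ge0 x : 0 <= complex.Re (innerA A x x).
Proof. by case: A_pos => _ /(_ x) []. Qed.

Lemma innerA_herm x y : innerA A y x = (innerA A x y)^*.
Proof.
apply: (sesq_herm_of_real_diag innerA_linear innerA_semilinear) => z.
by case: A_pos => _ /(_ z) [].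
Qed.

Lemma innerA_suml (I : Type) (r : seq I) (g : I -> H) z :
  innerA A (\sum_(i <- r) g i) z = \sum_(i <- r) innerA A (g i) z.
Proof.
apply: (big_morph (innerA A ^~ z)) => [x y|]; first exact: (sesqDl innerA_linear).
exact: (sesq0l innerA_linear).
Qed.

Lemma normA_ge0 x : 0 <= normA A x.
Proof. exact: sqrtr_ge0. Qed.

Lemma normA_sqr x : normA A x ^+ 2 = complex.Re (innerA A x x).
Proof. by rewrite sqr_sqrtr // Re_innerA_ge0. Qed.

Lemma normA0 : normA A 0 = 0.
Proof. by rewrite /normA -/(innerA A 0 0) (sesq0l innerA_linear) sqrtr0. Qed.

Lemma ler_normAD x y : normA A (x + y) <= normA A x + normA A y.
Proof. exact: (sesq_seminormD innerA_linear innerA_herm Re_innerA_ge0). Qed.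

Lemma normc_innerA_sqr_le x y : Normc.normc (innerA A x y) ^+ 2 <=
  complex.Re (innerA A x x) * complex.Re (innerA A y y).
Proof. exact: (normc_sesq_sqr_le innerA_linear innerA_herm Re_innerA_ge0). Qed.

Lemma Re_innerA_le x y : complex.Re (innerA A x y) <= normA A x * normA A y.
Proof. exact: (Re_sesq_le innerA_linear innerA_herm Re_innerA_ge0). Qed.

Lemma normA_le_hnorm : exists2 K, 0 <= K & forall y, normA A y <= K * hnorm y.
Proof.
case: A_pos => [[_ [M A_le]] _]; exists (Num.sqrt `|M|) => [|y]; first exact: sqrtr_ge0.
have hnorm_ge0 : 0 <= hnorm y by exact: sqrtr_ge0.
have Re_le : complex.Re (innerA A y y) <= `|M| * hnorm y ^+ 2.
  apply: le_trans (Re_le_normc _) _.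
  apply: le_trans (normc_sesq_le (@inner_linear _ H) (@inner_conj _ H)
    (fun x => proj2 (inner_pos x)) _ _) _.
  rewrite -/(hnorm _) -/(hnorm _) expr2 mulrA ler_wpM2r //.
  by apply: le_trans (A_le y) _; rewrite ler_wpM2r // ler_norm.
rewrite -ler_sqr ?nnegrE ?normA_ge0 ?mulr_ge0 ?sqrtr_ge0 //.
by rewrite exprMn normA_sqr sqr_sqrtr.
Qed.

Lemma A_adjoint_sym {X Y : H -> H} : A_adjoint A X Y -> A_adjoint A Y X.
Proof. by move=> XY u v; rewrite innerA_herm -XY -innerA_herm. Qed.

Lemma A_adjoint_comp {X Y : H -> H} : A_adjoint A X Y -> A_adjoint A (X \o Y) (X \o Y).
Proof. by move=> XY u v /=; rewrite XY (A_adjoint_sym XY). Qed.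

Lemma A_adjoint_iter {Q : H -> H} n : A_adjoint A Q Q -> A_adjoint A (iter n Q) (iter n Q).
Proof.
move=> QQ; elim: n => [|n IH] u v //=.
by rewrite QQ IH -iterSr.
Qed.

Lemma innerA_iter Q a b u v : A_adjoint A Q Q ->
  innerA A (iter a Q u) (iter b Q v) = innerA A (iter (b + a) Q u) v.
Proof. by move=> QQ; rewrite -(A_adjoint_iter b QQ) iterD. Qed.

Lemma A_adjoint_of_sharpA {T X : H -> H} : is_sharpA A T X -> A_adjoint A T X.
Proof.
move=> [_ [Ts [_ [T_Ts [AX _]]]]] u v.
have A_sym w z : inner (A w) z = inner w (A z).
  by rewrite -/(innerA A w z) innerA_herm /innerA [RHS]inner_conj.
by rewrite /innerA A_sym T_Ts -AX -A_sym.
Qed.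

Lemma A_bounded_of_selfadjoint Q : bounded Q -> A_adjoint A Q Q -> A_bounded A Q.
Proof.
move=> [_ [M Q_le]] QQ; have [K K_ge0 normA_le] := normA_le_hnorm.
have c_gt0 : 0 < `|M| + 1 by rewrite ltr_wpDl.
have Q_le_c x : hnorm (Q x) <= (`|M| + 1) * hnorm x.
  by apply: le_trans (Q_le x) _; rewrite ler_wpM2r ?sqrtr_ge0 // ler_wpDr // ler_norm.
exists (`|M| + 1) => x.
(* Reid's inequality: iterate [||Q^a x||_A^2 = <Q^(2a) x, x>_A <= ||Q^(2a) x||_A ||x||_A] *)
apply: (@le_of_sqr_chain _ (fun j => normA A (iter (2 ^ j) Q x)) _ _ (K * hnorm x))
  => // [|j|j|j]; try exact: normA_ge0.
- rewrite normA_sqr innerA_iter // expnS mul2n -addnn; exact: Re_innerA_le.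
- apply: le_trans (normA_le _) _; rewrite -mulrA ler_wpM2l // mulrC.
  by apply: iter_le_expr => //; exact: ltW.
Qed.

Lemma A_bounded_comp {X Y : H -> H} : bounded X -> bounded Y -> A_adjoint A X Y ->
  A_bounded A (X \o Y).
Proof.
by move=> X_bounded Y_bounded XY; apply: A_bounded_of_selfadjoint;
  [exact: bounded_comp | exact: A_adjoint_comp].
Qed.

Lemma A_bounded_iter Q n : A_bounded A Q -> A_bounded A (iter n Q).
Proof.
move=> [c Q_le]; exists (`|c| ^+ n); apply: iter_le_expr => // x.
by apply: le_trans (Q_le x) _; rewrite ler_wpM2r ?normA_ge0 ?ler_norm.
Qed.

Lemma A_boundedD {X Y : H -> H} :
  A_bounded A X -> A_bounded A Y -> A_bounded A (fun x => X x + Y x).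
Proof.
move=> [cX X_le] [cY Y_le]; exists (cX + cY) => x; rewrite mulrDl.
by apply: le_trans (ler_normAD _ _) _; apply: lerD.
Qed.

Lemma A_bounded_sum (I : Type) (r : seq I) (T : I -> H -> H) :
  (forall i, A_bounded A (T i)) -> A_bounded A (fun x => \sum_(i <- r) T i x).
Proof.
move=> T_bounded; elim: r => [|i r IH].
  by exists 0 => x; rewrite big_nil normA0 mul0r.
have [c le_c] := A_boundedD (T_bounded i) IH.
by exists c => x; rewrite big_cons.
Qed.

Lemma opnormA_ge0 T : 0 <= opnormA A T.
Proof.
rewrite /opnormA; set E := (X in sup X).
have [supE|/sup_out->//] := pselect (has_sup E).
have [r Er] := supE.1; apply: le_trans (sup_upper_bound supE Er).
by case: Er => x [_ ->]; exact: normA_ge0.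
Qed.

Lemma normA_le_opnormA T x : A_bounded A T -> normA A x = 1 -> normA A (T x) <= opnormA A T.
Proof.
move=> [c T_le] x1; apply: sup_upper_bound; last by exists x.
split; first by exists (normA A (T x)), x.
by exists c => _ [y [y1 ->]]; rewrite -[c]mulr1 -y1.
Qed.

Section McCarthy.
Variable P : H -> H.
Hypotheses (P_lin : is_linear P) (PP : A_adjoint A P P).
Hypothesis P_ge0 : forall u, 0 <= complex.Re (innerA A (P u) u).

(* The moments m j = <P^j x, x>_A are log-convex: with b := odd j and c := j./2,
   m j, m j.+1, m j.+2 are g(u, u), g(u', u), g(u', u') for u := P^c x, u' := P^c.+1 x
   and the positive Hermitian form g(u, v) := <P^b u, v>_A, so Cauchy-Schwarz applies. *)
Lemma mccarthy_ineq x n : normA A x = 1 ->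
  complex.Re (innerA A (P x) x) ^+ n <= complex.Re (innerA A (iter n P x) x).
Proof.
move=> x1; pose m j := complex.Re (innerA A (iter j P x) x).
pose g (b : bool) u v := innerA A (iter b P u) v.
have g_lin b a u v z : g b (a *: u + v) z = a * g b u z + g b v z.
  by rewrite /g iter_linear // innerA_linear.
have g_herm b u v : g b v u = (g b u v)^*.
  by rewrite /g (A_adjoint_iter b PP) innerA_herm.
have g_ge0 b u : 0 <= complex.Re (g b u u).
  by case: b; [exact: P_ge0 | exact: Re_innerA_ge0].
have g_iter b s t : g b (iter s P x) (iter t P x) = innerA A (iter (t + (b + s)) P x) x.
  by rewrite /g -iterD innerA_iter.
have j_split j : (j./2 + (odd j + j./2) = j)%N by rewrite addnCA addnn odd_double_half.
have m_ge0 j : 0 <= m j.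
  by have := g_ge0 (odd j) (iter j./2 P x); rewrite g_iter j_split.
have m_log_convex j : m j.+1 ^+ 2 <= m j * m j.+2.
  have := sqr_Re_sesq_le (g_lin (odd j)) (g_herm (odd j)) (g_ge0 (odd j))
    (iter j./2.+1 P x) (iter j./2 P x).
  by rewrite !g_iter !addnS addSn j_split mulrC.
have m0 : m 0%N = 1 by rewrite /m -normA_sqr x1 expr1n.
exact: expr_le_of_log_convex m0 m_ge0 m_log_convex n.
Qed.

End McCarthy.

Lemma mccarthy_comp X Y x n : is_linear X -> is_linear Y -> A_adjoint A X Y ->
  normA A x = 1 ->
  complex.Re (innerA A (Y x) (Y x)) ^+ n <= complex.Re (innerA A (iter n (X \o Y) x) x).
Proof.
move=> X_lin Y_lin XY x1; rewrite -XY; apply: mccarthy_ineq => //.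
- by move=> a u v /=; rewrite Y_lin X_lin.
- exact: A_adjoint_comp.
- by move=> u /=; rewrite XY Re_innerA_ge0.
Qed.

Lemma normc_innerA_expr_le X Y x n : is_linear X -> is_linear Y -> A_adjoint A X Y ->
  normA A x = 1 ->
  Normc.normc (innerA A (Y x) x) ^+ (2 * n) <=
  (complex.Re (innerA A (iter n (X \o Y) x) x) +
   complex.Re (innerA A (iter n (Y \o X) x) x)) / 2.
Proof.
move=> X_lin Y_lin XY x1; have YX := A_adjoint_sym XY.
have x1' : complex.Re (innerA A x x) = 1 by rewrite -normA_sqr x1 expr1n.
have le_Y := normc_innerA_sqr_le (Y x) x; rewrite x1' mulr1 in le_Y.
have le_X := normc_innerA_sqr_le x (X x); rewrite -YX x1' mul1r in le_X.
have := mccarthy_comp X Y x n X_lin Y_lin XY x1.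
have := mccarthy_comp Y X x n Y_lin X_lin YX x1.
rewrite exprM; set a := Normc.normc _ ^+ 2 in le_X le_Y *.
have a_ge0 : 0 <= a by exact: sqr_ge0.
have := lerXn2r n a_ge0 (Re_innerA_ge0 _) le_X.
have := lerXn2r n a_ge0 (Re_innerA_ge0 _) le_Y.
lra.
Qed.

Lemma normc_innerA_sum_expr_le k (S Ssh : 'I_k -> H -> H) n x :
  (forall i, is_linear (S i)) -> (forall i, is_linear (Ssh i)) ->
  (forall i, A_adjoint A (Ssh i) (S i)) -> (0 < n)%N -> normA A x = 1 ->
  Normc.normc (innerA A (\sum_i S i x) x) ^+ (2 * n) <=
  (k ^ (2 * n - 1))%:R / 2 *
  complex.Re (innerA A (\sum_i (iter n (Ssh i \o S i) x + iter n (S i \o Ssh i) x)) x).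
Proof.
move=> S_lin Ssh_lin adj n_gt0 x1; pose a i := Normc.normc (innerA A (S i x) x).
have a_ge0 i : 0 <= a i by exact: normc_ge0.
apply: (@le_trans _ _ ((\sum_i a i) ^+ (2 * n))).
  rewrite innerA_suml; apply: lerXn2r; rewrite ?nnegrE ?normc_ge0 ?sumr_ge0 //.
  exact: normc_sumr_le.
have n2 : (2 * n = (2 * n - 1).+1)%N by rewrite subn1 prednK // muln_gt0.
rewrite [in X in X <= _]n2; apply: le_trans (expr_sumr_le _ _ a_ge0) _.
rewrite -n2 natrX -mulrA [_^-1 * _]mulrC ler_wpM2l ?exprn_ge0 //.
rewrite innerA_suml raddf_sum mulr_suml; apply: ler_sum => i _.
by rewrite (sesqDl innerA_linear) raddfD; exact: normc_innerA_expr_le.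
Qed.

End ASemiInnerProduct.

Theorem theorem3p12 (R : realType) (H : HilbertSpace R) (A : H -> H)
  (hA : positive_op A) (hA0 : exists x : H, A x <> 0)
  (k : nat) (hk : (1 <= k)%N) (S Ssh : 'I_k -> H -> H)
  (hS : forall i, in_BA A (S i)) (hSsh : forall i, is_sharpA A (S i) (Ssh i))
  (n : nat) (hn : (0 < n)%N) :
  numradA A (fun x => \sum_(i < k) S i x) ^+ (2 * n)
  <= (k ^ (2 * n - 1))%:R / 2 *
     opnormA A (fun x => \sum_(i < k)
        (iter n (Ssh i \o S i) x + iter n (S i \o Ssh i) x)).
Proof.
have S_bounded i : bounded (S i) by case: (hS i).
have Ssh_bounded i : bounded (Ssh i) by case: (hSsh i).
have adj i : A_adjoint A (S i) (Ssh i) := A_adjoint_of_sharpA hA (hSsh i).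
have adj' i : A_adjoint A (Ssh i) (S i) := A_adjoint_sym hA (adj i).
set T := (X in opnormA A X).
have T_bounded : A_bounded A T.
  apply: (A_bounded_sum hA) => i; apply: (A_boundedD hA); apply: A_bounded_iter.
  - exact: (A_bounded_comp hA (Ssh_bounded i) (S_bounded i) (adj' i)).
  - exact: (A_bounded_comp hA (S_bounded i) (Ssh_bounded i) (adj i)).
apply: sup_expr_le; first by rewrite muln_gt0.
  by rewrite mulr_ge0 ?divr_ge0 // opnormA_ge0.
move=> _ [x [x1 ->]]; split; first exact: normc_ge0.
have S_lin i : is_linear (S i) by case: (S_bounded i).
have Ssh_lin i : is_linear (Ssh i) by case: (Ssh_bounded i).
apply: le_trans (normc_innerA_sum_expr_le hA _ _ _ _ _ S_lin Ssh_lin adj' hn x1) _.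
rewrite ler_wpM2l ?divr_ge0 //; apply: le_trans (Re_innerA_le hA _ _) _.
by rewrite x1 mulr1 normA_le_opnormA.
Qed.
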